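(* Let $G$ be a finite group which is not simple (and nontrivial). Then $|L(G)|$ is disconnected if and only if $G\cong A\rtimes \mathbb{Z}/p$ where $A\neq 1$ is an elementary abelian group, $p$ is prime, and $A$ has no proper nontrivial subgroup invariant under the action of $\mathbb{Z}/p$.
   Context: $L(G)$ is the poset of proper nontrivial subgroups of $G$ ordered by inclusion, and $|L(G)|$ the geometric realization of its order complex. Disconnected means not path-connected. *)

From HB Require Import structures.
From mathcomp Require Import all_boot all_order all_algebra all_fingroup all_solvable.
From mathcomp Require Import all_classical all_reals all_analysis.
From mathcomp Require Import Rstruct Rstruct_topology.
From Stdlib Require Import Rdefinitions.
Set Implicit Arguments. Unset Strict Implicit. Unset Printing Implicit Defensive.
Import Order.TTheory GRing.Theory Num.Theory.
Local Open Scope classical_set_scope.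
Local Open Scope ring_scope.

Definition subgroup_poset (gT : finGroupType) (G : {group gT}) : {set {group gT}} :=
  [set H : {group gT} | (H \proper G) && (H :!=: 1)%g].

(* Geometric realisation of the order complex of L(G): the points are the
   convex combinations of vertices of L(G) whose support is a chain, i.e.
   functions f : {group gT} -> R, f >= 0, sum f = 1, supported on a chain of
   L(G).  The topology is the subspace topology of the product topology
   R^{group gT}; for a finite complex this coincides with the usual
   (weak / Euclidean) topology of the realisation. *)
Definition order_complex_realization (gT : finGroupType) (G : {group gT})
  : set {ptws {group gT} -> R} :=
  [set f | (forall H, 0 <= f H)
        /\ (forall H, f H != 0 -> H \in subgroup_poset G)
        /\ \sum_(H : {group gT}) f H = 1
        /\ (forall H K, f H != 0 -> f K != 0 -> (H \subset K) || (K \subset H))].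

Definition path_connected_set (X : topologicalType) (A : set X) : Prop :=
  forall x y, A x -> A y ->
    exists f : R -> X,
      [/\ f 0 = x, f 1 = y,
          {within [set t : R | 0 <= t <= 1], continuous f}
        & forall t : R, 0 <= t <= 1 -> A (f t)].

Definition disconnected_space (X : topologicalType) (A : set X) : Prop :=
  ~ path_connected_set A.

(* The realisation is path connected as soon as the comparability graph of
   L(G) is connected: every point lies on a segment ending at a vertex of its
   support, and comparable vertices span an edge.  Fix a proper minimal normal
   subgroup N.  A vertex H outside the component of N meets N trivially,
   generates G together with N, and is both minimal and maximal in L(G); hence
   G = N ><| H with |H| prime, a Frattini argument shows that N is solvable,
   so N is elementary abelian, and minimality of N makes it H-irreducible.
   Conversely, in such a semidirect product the complement P is maximal of
   prime order, hence an isolated vertex: along a path from P to A the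
   P-coordinate would take the value 1/2, whereas at every point of the
   realisation the coordinate of an isolated vertex is 0 or 1. *)

From HB Require Import structures.
From mathcomp Require Import all_boot all_order all_algebra all_fingroup all_solvable.
From mathcomp Require Import all_classical all_reals all_analysis.
From mathcomp Require Import Rstruct Rstruct_topology.
From Stdlib Require Import Rdefinitions.
From mathcomp Require Import lra.
Set Implicit Arguments. Unset Strict Implicit. Unset Printing Implicit Defensive.
Import Order.TTheory GRing.Theory Num.Theory.
Local Open Scope classical_set_scope.
Local Open Scope ring_scope.

Lemma affine_continuous (a b : R) : continuous (fun t : R => a * t + b).
Proof.
move=> t; apply: (@continuousD _ R^o _ (fun t => a * t) (cst b)).
  by apply: (@continuousM _ _ (cst a) id); [exact: cst_continuous | exact: cvg_id].
exact: cst_continuous.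
Qed.

Lemma continuous_comp_affine (X : topologicalType) (f : R -> X) (a b : R) :
  continuous f -> continuous (fun t => f (a * t + b)).
Proof.
by move=> cf t; apply: (continuous_comp (f := fun t => a * t + b)) (cf _); apply: affine_continuous.
Qed.

Lemma ptws_continuous (I : Type) (g : R -> {ptws I -> R}) :
  (forall i, continuous (fun t => g t i)) -> continuous g.
Proof.
move=> cg t; apply/cvg_sup => i U [_ [[W oW <-]]] /= Wgt /filterS; apply.
exact/cg/open_nbhs_nbhs.
Qed.

Section PathJoined.

Variables (X : topologicalType) (A : set X).

Definition path_joined (x y : X) : Prop :=
  exists f : R -> X, [/\ f 0 = x, f 1 = y, continuous f
    & forall t : R, 0 <= t <= 1 -> A (f t)].

Lemma path_joined_refl x : A x -> path_joined x x.
Proof. by move=> Ax; exists (cst x); split=> //; apply: cst_continuous. Qed.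

Lemma path_joined_sym x y : path_joined x y -> path_joined y x.
Proof.
case=> f [f0 f1 cf fA]; exists (fun t => f (-1 * t + 1)); split.
- by rewrite mulr0 add0r.
- by rewrite mulr1 addNr.
- exact: continuous_comp_affine.
- by move=> t /andP[t0 t1]; apply: fA; apply/andP; split; lra.
Qed.

Lemma path_joined_trans x y z :
  path_joined x y -> path_joined y z -> path_joined x z.
Proof.
case=> f [f0 f1 cf fA] [g [g0 g1 cg gA]].
pose h t := if t <= 2^-1 then f (2 * t + 0) else g (2 * t + -1).
have hl : {in [set t : R | t <= 2^-1], h =1 (fun t => f (2 * t + 0))}.
  by move=> t; rewrite inE /h /= => ->.
have hr : {in [set t : R | 2^-1 <= t], h =1 (fun t => g (2 * t + -1))}.
  move=> t; rewrite inE /h /=; case: ifP => // t1 t2.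
  have -> : t = 2^-1 by apply/eqP; rewrite eq_le t1 t2.
  by rewrite addr0 mulfV // f1 -g0; congr g; lra.
exists h; split.
- by rewrite /h ifT ?mulr0 ?addr0 //; lra.
- rewrite /h ifF; first by rewrite -g1; congr g; lra.
  by apply/negbTE; rewrite -ltNge; lra.
- apply/continuous_subspace_setT.
  have -> : [set: R] = [set t : R | t <= 2^-1] `|` [set t : R | 2^-1 <= t].
    by apply/seteqP; split=> t _ //=; case: (lerP t 2^-1) => ht; [left | right; apply: ltW].
  apply: withinU_continuous; [exact: closed_le | exact: closed_ge | |].
  + apply: subspace_eq_continuous (fun t ht => esym (hl t ht)) _.
    exact/continuous_subspaceT/continuous_comp_affine.
  + apply: subspace_eq_continuous (fun t ht => esym (hr t ht)) _.
    exact/continuous_subspaceT/continuous_comp_affine.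
- move=> t /andP[t0 t1]; rewrite /h; case: ifP => [ht | /negbT].
    by apply: fA; apply/andP; split; lra.
  by rewrite -ltNge => ht; apply: gA; apply/andP; split; lra.
Qed.

End PathJoined.

Local Close Scope ring_scope.
Local Close Scope classical_set_scope.
Local Open Scope group_scope.

Section SubgroupComparability.

Variables (gT : finGroupType) (G : {group gT}).

Definition comparable_subgroups : rel {group gT} :=
  fun H K => [&& H \in subgroup_poset G, K \in subgroup_poset G
               & (H \subset K) || (K \subset H)].

Definition isolated_subgroup (P : {group gT}) : Prop :=
  forall K, K \in subgroup_poset G -> (K \subset P) || (P \subset K) -> K = P.

Lemma maximal_prime_isolated (P : {group gT}) :
  maximal P G -> prime #|P| -> isolated_subgroup P.
Proof.
move=> /maxgroupP[_ maxP] prP K; rewrite inE => /andP[prK ntK] /orP[sKP | sPK].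
  apply/val_inj/eqP; rewrite eqEcard sKP /= (prime_nt_dvdP prP _ (cardSg sKP)) //.
  by rewrite -trivg_card1.
exact/val_inj/(maxP K).
Qed.

Lemma minnormal_subgroup_poset_exists :
  G :!=: 1 -> ~~ simple G -> exists2 N : {group gT}, minnormal N G & N \in subgroup_poset G.
Proof.
move=> ntG /simpleP nsimG.
have [M [/andP[sMG nMG] ntM neMG]] :
    exists M : {group gT}, [/\ normal M G, M :!=: 1 & M :!=: G].
  apply: contrapT => noM; apply: nsimG; split=> // H nsHG.
  have [-> | ntH] := eqVneq (H : {set gT}) 1; [by left | right].
  by apply: contrapT => neHG; apply: noM; exists H; split=> //; apply/eqP.
have [N minN sNM] := minnormal_exists ntM nMG.
exists N => //; have /andP[ntN _] := mingroupp minN.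
by rewrite inE ntN andbT (sub_proper_trans sNM) // finset.properEneq neMG.
Qed.

Lemma connect_comparable_subgroups_meet (H K : {group gT}) :
  H \in subgroup_poset G -> K \in subgroup_poset G -> H :&: K != 1 ->
  connect comparable_subgroups H K.
Proof.
rewrite !inE => /andP[prH ntH] /andP[prK ntK] ntHK.
have HKP : (H :&: K)%G \in subgroup_poset G.
  by rewrite inE ntHK (sub_proper_trans (subsetIl H K) prH).
apply: (connect_trans (y := (H :&: K)%G)); apply: connect1.
  by rewrite /comparable_subgroups HKP inE prH ntH subsetIl orbT.
by rewrite /comparable_subgroups HKP inE prK ntK subsetIr.
Qed.

Section MinnormalComponent.

Variables (N H : {group gT}).
Hypotheses (minN : minnormal N G) (NP : N \in subgroup_poset G).
Hypotheses (HP : H \in subgroup_poset G).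
Hypothesis notNH : ~~ connect comparable_subgroups H N.

Let prN : N \proper G. Proof. by move: NP; rewrite inE => /andP[]. Qed.

Let connect_over (K : {group gT}) :
  K \in subgroup_poset G -> N \subset K -> connect comparable_subgroups K N.
Proof. by move=> KP sNK; apply: connect1; rewrite /comparable_subgroups KP NP sNK orbT. Qed.

Lemma minnormal_component_TI : N :&: H = 1.
Proof.
apply/eqP; apply: contraNT notNH => ntNH.
by apply: connect_comparable_subgroups_meet; rewrite // finset.setIC.
Qed.

Let prH : H \proper G. Proof. by move: HP; rewrite inE => /andP[]. Qed.
Let ntH : H :!=: 1. Proof. by move: HP; rewrite inE => /andP[]. Qed.

Let nNH : H \subset 'N(N).
Proof.
have /andP[_ nNG] := mingroupp minN.
by apply: fintype.subset_trans nNG; apply: proper_sub.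
Qed.

Let not_connect_through (K : {group gT}) :
  K \in subgroup_poset G -> (H \subset K) || (K \subset H) ->
  ~~ connect comparable_subgroups K N.
Proof.
move=> KP cmpHK; apply: contra notNH; apply: connect_trans; apply: connect1.
by rewrite /comparable_subgroups HP KP.
Qed.

Lemma minnormal_component_mul : N * H = G.
Proof.
rewrite -norm_joinEr //; apply/eqP; rewrite eqEproper join_subG !proper_sub //=.
apply/negP => prNH.
have NHP : (N <*> H)%G \in subgroup_poset G.
  by rewrite inE prNH; apply: subG1_contra ntH; rewrite joing_subr.
have := not_connect_through NHP; rewrite joing_subr => /(_ isT) /negP; apply.
exact/connect_over/joing_subl.
Qed.

Lemma minnormal_component_cardG : #|G| = (#|N| * #|H|)%nat.
Proof.
by rewrite -minnormal_component_mul TI_cardMg // minnormal_component_TI.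
Qed.

Lemma minnormal_component_prime : prime #|H|.
Proof.
have [H1 | [p p_pr pH]] := trivgVpdiv H; first by move: ntH; rewrite H1 eqxx.
have [x Hx ox] := Cauchy p_pr pH.
suff eHx : <[x]> = H by rewrite -eHx -orderE ox.
apply/eqP; rewrite eqEcard cycle_subG Hx /= -orderE ox leqNgt; apply/negP => ltpH.
have sxH : <[x]> \subset H by rewrite cycle_subG.
have tiNx : N :&: <[x]> = 1.
  by apply/trivgP; rewrite -(minnormal_component_TI) finset.setIS.
have nNx : <[x]> \subset 'N(N) := fintype.subset_trans sxH nNH.
have xP : <[x]>%G \in subgroup_poset G.
  rewrite inE (sub_proper_trans sxH prH) /= cycle_eq1 -order_gt1 ox.
  exact: prime_gt1.
have Nx_P : (N <*> <[x]>)%G \in subgroup_poset G.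
  have ntNx : N <*> <[x]> != 1.
    by apply: subG1_contra (joing_subl _ _) _; case/andP: (mingroupp minN).
  rewrite inE ntNx andbT properEcard join_subG proper_sub //=.
  rewrite (fintype.subset_trans sxH) ?proper_sub // norm_joinEr // TI_cardMg //.
  by rewrite minnormal_component_cardG -orderE ox ltn_pmul2l ?cardG_gt0.
have := not_connect_through xP; rewrite sxH orbT => /(_ isT) /negP; apply.
apply: connect_trans (connect_over Nx_P (joing_subl _ _)).
by apply: connect1; rewrite /comparable_subgroups xP Nx_P joing_subr.
Qed.

Lemma minnormal_component_maximal : maximal H G.
Proof.
apply/maxgroupP; split=> // M prM sHM; apply/eqP; rewrite eq_sym eqEcard sHM /=.
rewrite leqNgt; apply/negP => ltHM.
have MP : M \in subgroup_poset G by rewrite inE prM (subG1_contra sHM).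
have ntNM : N :&: M != 1.
  apply/negP => /eqP tiNM.
  have : #|N * M| <= #|G| by apply: subset_leq_card; rewrite mulG_subG !proper_sub.
  by rewrite TI_cardMg // minnormal_component_cardG leq_pmul2l ?cardG_gt0 // leqNgt ltHM.
have := not_connect_through MP; rewrite sHM => /(_ isT) /negP; apply.
by apply: connect_comparable_subgroups_meet; rewrite // finset.setIC.
Qed.

End MinnormalComponent.

Lemma prime_maximal_Sylow_or_pgroup (H : {group gT}) :
  prime #|H| -> maximal H G -> #|H|.-Sylow(G) H \/ #|H|.-group G.
Proof.
move=> prH /maxgroupP[/proper_sub sHG maxH].
have [S sylS sHS] := Sylow_superset sHG (pnat_id prH).
have [eSG | prS] := eqVproper (pHall_sub sylS).
  by right; rewrite -eSG; apply: pHall_pgroup sylS.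
have eHS : H = S by apply/val_inj/esym/(maxH S).
by left; move: sylS; rewrite -eHS.
Qed.

Lemma minnormal_maximal_complement_solvable (N H : {group gT}) :
    minnormal N G -> N :&: H = 1 -> N * H = G -> prime #|H| -> maximal H G ->
  solvable N.
Proof.
move=> minN tiNH defG prH maxH.
have /andP[ntN nNG] := mingroupp minN.
have sNG : N \subset G by rewrite -defG mulG_subl.
have [sylH | pG] := prime_maximal_Sylow_or_pgroup prH maxH; last first.
  exact: solvableS sNG (pgroup_sol pG).
have [N1 | [q q_pr qN]] := trivgVpdiv N; first by rewrite N1 eqxx in ntN.
have [Q sylQ] := Sylow_exists q N.
have ntQ : Q :!=: 1.
  rewrite -cardG_gt1 (card_Hall sylQ) p_part -(expn0 q) ltn_exp2l ?prime_gt1 //.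
  by rewrite logn_gt0 mem_primes q_pr cardG_gt0.
have [nQG | nnQG] := boolP (G \subset 'N(Q)).
  have [_ minN'] := mingroupP minN.
  rewrite -(minN' Q _ (pHall_sub sylQ)) ?ntQ //.
  exact: pgroup_sol (pHall_pgroup sylQ).
pose M := (G :&: 'N(Q))%G.
have prM : M \proper G.
  by rewrite finset.properEneq subsetIl andbT; apply: contraNneq nnQG => <-; apply: subsetIr.
have pM : #|H| %| #|M|.
  have nsNG : normal N G by rewrite /normal sNG.
  have := mul_cardG N M; rewrite (Frattini_arg nsNG sylQ) -defG.
  rewrite TI_cardMg // -mulnA => /eqP; rewrite eqn_pmul2l ?cardG_gt0 // => /eqP ->.
  exact: dvdn_mulr.
have [y My oy] := Cauchy prH pM.
have [z Gz sHz] : exists2 z, z \in G & <[y]> :^ z \subset H.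
  apply: Sylow_Jsub sylH _ _; last by rewrite /pgroup -orderE oy pnat_id.
  by rewrite cycle_subG; apply: (fintype.subsetP (subsetIl G 'N(Q))).
have eHz : H :=: M :^ z.
  have : H \subset M :^ z.
    have eyz : <[y]> :^ z = H by apply/eqP; rewrite eqEcard sHz cardJg -orderE oy leqnn.
    by rewrite -eyz conjSg cycle_subG.
  case/maxgroupP: maxH => _ maxH'; move/(maxH' (M :^ z)%G) => <- //.
  by rewrite properEcard /= cardJg proper_card // -{2}(conjGid Gz) conjSg proper_sub.
have sQN := pHall_sub sylQ.
have : Q :^ z \subset N :&: H.
  rewrite finset.subsetI eHz !conjSg finset.subsetI normG (fintype.subset_trans sQN sNG).
  by rewrite -(normP (fintype.subsetP nNG z Gz)) conjSg sQN.
by rewrite tiNH subG1 conjsg_eq1 (negPf ntQ).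
Qed.

Lemma minnormal_maximal_complement_irreducible (N H : {group gT}) :
    minnormal N G -> N :&: H = 1 -> N * H = G -> prime #|H| -> maximal H G ->
  [/\ N ><| H = G, exists2 q, prime q & q.-abelem N
    & forall K : {group gT}, K \subset N -> H \subset 'N(K) -> K :=: 1 \/ K :=: N].
Proof.
move=> minN tiNH defG prH maxH.
have solN := minnormal_maximal_complement_solvable minN tiNH defG prH maxH.
have [_ _ /is_abelemP[q q_pr abN]] := minnormal_solvable minN (subxx N) solN.
have /andP[_ nNG] := mingroupp minN.
have nNH : H \subset 'N(N) by rewrite (fintype.subset_trans _ nNG) // -defG mulG_subr.
split; [by rewrite sdprodE | by exists q | move=> K sKN nKH].
have nKG : G \subset 'N(K).
  by rewrite -defG mulG_subG nKH sub_abelian_norm ?(abelem_abelian abN).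
have [-> | ntK] := eqVneq (K : {set gT}) 1; [by left | right].
by have [_ ->] := mingroupP minN; rewrite ?ntK.
Qed.

Lemma irreducible_prime_complement_maximal (A P : {group gT}) :
    A ><| P = G -> A :!=: 1 ->
    (forall K : {group gT}, K \subset A -> P \subset 'N(K) -> K :=: 1 \/ K :=: A) ->
  maximal P G.
Proof.
move=> /sdprodP[_ defG nAP tiAP] ntA irrA.
have sAG : A \subset G by rewrite -defG mulG_subl.
have prPG : P \proper G.
  rewrite finset.properEneq -{2}defG mulG_subr andbT; apply: contraNneq ntA => eGP.
  by rewrite -subG1 -tiAP finset.subsetI subxx eGP.
apply/maxgroupP; split=> // M prM sPM; apply/val_inj.
have nMA_P : P \subset 'N(M :&: A) by rewrite normsI // normsG.
have sMG := proper_sub prM.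
case: (irrA (M :&: A)%G (subsetIr _ _) nMA_P) => /= eMA.
  by rewrite -(finset.setIidPl sMG) -defG -group_modr // eMA mul1g.
case/negP: (proper_subn prM).
by rewrite -defG mulG_subG sPM -eMA subsetIl.
Qed.

Lemma sdprod_subgroup_poset (A P : {group gT}) :
    A ><| P = G -> A :!=: 1 -> P :!=: 1 ->
  [/\ A \in subgroup_poset G, P \in subgroup_poset G & A != P].
Proof.
move=> /sdprodP[_ defG _ tiAP] ntA ntP.
have sub_TI (B C : {group gT}) : B :!=: 1 -> B \subset C -> B :&: C = 1 -> False.
  by move=> ntB sBC tiBC; case/negP: ntB; rewrite -subG1 -tiBC finset.subsetI subxx.
split; rewrite ?inE ?ntA ?ntP ?andbT ?finset.properEneq.
- rewrite -{2}defG mulG_subl andbT; apply/eqP => eAG.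
  by apply: (sub_TI P A); rewrite 1?finset.setIC // eAG -defG mulG_subr.
- rewrite -{2}defG mulG_subr andbT; apply/eqP => ePG.
  by apply: (sub_TI A P); rewrite // ePG -defG mulG_subl.
- by apply/eqP => eAP; apply: (sub_TI A P); rewrite // eAP.
Qed.

End SubgroupComparability.

Local Close Scope group_scope.
Local Open Scope ring_scope.
Local Open Scope classical_set_scope.

Section Realization.

Variables (gT : finGroupType) (G : {group gT}).

Local Notation realization := (order_complex_realization G).

Definition vertex (H : {group gT}) : {ptws {group gT} -> R} :=
  fun K => if K == H then 1 else 0.

Lemma vertex_neq0 (H K : {group gT}) : (vertex H K != 0) = (K == H).
Proof. by rewrite /vertex; case: ifP; rewrite ?oner_eq0 ?eqxx. Qed.

Lemma realization_vertex (H : {group gT}) :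
  H \in subgroup_poset G -> realization (vertex H).
Proof.
move=> HP; split; [|split; [|split]].
- by move=> K; rewrite /vertex; case: ifP.
- by move=> K; rewrite vertex_neq0 => /eqP->.
- by rewrite (bigD1 H) //= /vertex eqxx big1 ?addr0 // => K /negbTE ->.
- by move=> K L; rewrite !vertex_neq0 => /eqP-> /eqP->; rewrite subxx.
Qed.

Lemma realization_segment (f g : {ptws {group gT} -> R}) :
    realization f -> realization g ->
    (forall H K, (f H != 0) || (g H != 0) -> (f K != 0) || (g K != 0) ->
       (H \subset K) || (K \subset H)) ->
  path_joined realization f g.
Proof.
move=> [f0 [fs [f1 fc]]] [g0 [gs [g1 gc]]] chain.
have supp t H : (1 - t) * f H + t * g H != 0 -> (f H != 0) || (g H != 0).
  apply: contraNT; rewrite negb_or => /andP[/negPn/eqP-> /negPn/eqP->].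
  by rewrite !mulr0 addr0.
exists (fun t => (fun K => (1 - t) * f K + t * g K) : {ptws {group gT} -> R}); split.
- by apply: funext => K /=; rewrite subr0 mul1r mul0r addr0.
- by apply: funext => K /=; rewrite subrr mul0r mul1r add0r.
- apply: ptws_continuous => K /=.
  have -> : (fun t : R => (1 - t) * f K + t * g K) = (fun t => (g K - f K) * t + f K).
    by apply: funext => t; lra.
  exact: affine_continuous.
- move=> t /andP[t0 t1]; split; [|split; [|split]].
  + by move=> H; apply: addr_ge0; apply: mulr_ge0 => //; lra.
  + by move=> H /supp /orP[/fs|/gs].
  + by rewrite big_split /= -!mulr_sumr f1 g1; lra.
  + by move=> H K /supp hH /supp hK; apply: chain.
Qed.

Lemma realization_joined_vertex f :
  realization f -> exists2 H, H \in subgroup_poset G & path_joined realization f (vertex H).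
Proof.
move=> Xf; have [f0 [fs [f1 fc]]] := Xf.
have [H fH] : exists H, f H != 0.
  apply: contrapT => nf; move: f1; rewrite big1 => [/esym/eqP|K _]; first by rewrite oner_eq0.
  by apply: contrapT => /eqP fK; apply: nf; exists K.
exists H; first exact: fs.
apply: realization_segment => //; first exact/realization_vertex/fs.
by move=> K L; rewrite !vertex_neq0 => /orP[fK | /eqP->] /orP[fL | /eqP->]; apply: fc.
Qed.

Lemma connect_vertex_joined (H K : {group gT}) :
    H \in subgroup_poset G -> connect (comparable_subgroups G) H K ->
  path_joined realization (vertex H) (vertex K).
Proof.
move=> HP /connectP[p]; elim: p H HP => [|L p IHp] H HP /=.
  by move=> _ ->; apply/path_joined_refl/realization_vertex.
case/andP=> /and3P[_ LP cmpHL] pL eK; apply: path_joined_trans (IHp L LP pL eK).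
apply: realization_segment; try exact: realization_vertex.
move=> A B; rewrite !vertex_neq0.
by move=> /orP[]/eqP-> /orP[]/eqP->; rewrite ?subxx // orbC.
Qed.

Lemma realization_path_connected (N : {group gT}) :
    N \in subgroup_poset G ->
    (forall H, H \in subgroup_poset G -> connect (comparable_subgroups G) H N) ->
  path_connected_set realization.
Proof.
move=> NP connN x y Xx Xy.
have [H HP xH] := realization_joined_vertex Xx.
have [K KP yK] := realization_joined_vertex Xy.
have [f [f0 f1 cf fX]] : path_joined realization x y.
  apply: path_joined_trans xH _; apply: path_joined_trans (connect_vertex_joined HP (connN H HP)) _.
  by apply: path_joined_sym; apply: path_joined_trans yK (connect_vertex_joined KP (connN K KP)).
by exists f; split=> //; apply: continuous_subspaceT.
Qed.

Lemma isolated_vertex_coord (P : {group gT}) f :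
  isolated_subgroup G P -> realization f -> f P != 0 -> f P = 1.
Proof.
move=> isoP [f0 [fs [f1 fc]]] fP.
rewrite -f1 (bigD1 P) //= big1 ?addr0 // => K nKP.
apply: contraNeq nKP => fK; apply/eqP/isoP; [exact: fs | exact: fc].
Qed.

Lemma isolated_vertex_disconnected (P Q : {group gT}) :
    P \in subgroup_poset G -> Q \in subgroup_poset G -> Q != P -> isolated_subgroup G P ->
  ~ path_connected_set realization.
Proof.
move=> PP QP nQP isoP /(_ _ _ (realization_vertex PP) (realization_vertex QP)).
case=> f [f0 f1 cf fX].
have cfP : {within `[0, 1], continuous (fun t => f t P)}.
  rewrite set_itvcc => t.
  apply: (@continuous_comp (subspace [set t : R | 0 <= t <= 1]) _ _
    (from_subspace [set t : R | 0 <= t <= 1] f) (fun g => g P) t (cf t)).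
  exact: (@proj_continuous _ (fun _ => R) P).
have [] := @IVT R (fun t => f t P) 0 1 2^-1 ler01 cfP.
  rewrite f0 f1 /vertex eqxx eq_sym (negPf nQP) minEle maxEle ler10 /=.
  by apply/andP; split; lra.
move=> c; rewrite in_itv /= => c01 fcP.
have := isolated_vertex_coord isoP (fX c c01).
by rewrite fcP; lra.
Qed.

End Realization.

Local Open Scope group_scope.

Theorem mainTheorem19 (gT : finGroupType) (G : {group gT}) :
  G :!=: 1 -> ~~ simple G ->
  (disconnected_space (order_complex_realization G) <->
   exists (A P : {group gT}) (p : nat),
     [/\ A ><| P = G,
         prime p /\ #|P| = p,
         A :!=: 1,
         (exists2 q, prime q & q.-abelem A)
       & forall H : {group gT}, H \subset A -> P \subset 'N(H) ->
           H :=: 1 \/ H :=: A]).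
Proof.
move=> ntG nsimG; split.
- move=> disconnected; apply: contrapT => noDecomp; apply: disconnected.
  have [N minN NP] := minnormal_subgroup_poset_exists ntG nsimG.
  apply: (realization_path_connected NP) => H HP; apply: contrapT => /negP notNH.
  have tiNH := minnormal_component_TI NP HP notNH.
  have defG := minnormal_component_mul minN NP HP notNH.
  have prH := minnormal_component_prime minN NP HP notNH.
  have maxH := minnormal_component_maximal minN NP HP notNH.
  have [sdG abN irrN] := minnormal_maximal_complement_irreducible minN tiNH defG prH maxH.
  by apply: noDecomp; exists N, H, #|H|; split=> //; case/andP: (mingroupp minN).
- case=> A [P [p [sdG [p_pr oP] ntA _ irrA]]].
  have ntP : P :!=: 1 by rewrite trivg_card1 oP; case: eqP p_pr => // ->.
  have [AP PP nAP] := sdprod_subgroup_poset sdG ntA ntP.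
  apply: (isolated_vertex_disconnected PP AP nAP).
  have maxP := irreducible_prime_complement_maximal sdG ntA irrA.
  by apply: maximal_prime_isolated maxP _; rewrite oP.
Qed.
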